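(* Let $\mathcal{G}^1$ and $\mathcal{G}^2$ be any two edge-featured graphs (as described in the context). The E-WL-EA algorithm distinguishes $\mathcal{G}^1$ and $\mathcal{G}^2$ if and only if the E-WL algorithm distinguishes them; that is, the discriminative power of E-WL-EA is the same as that of E-WL.
   Context: An edge-featured graph is $\mathcal{G}=(\mathcal{V},\mathcal{E},\mathcal{X}_V,\mathcal{X}_E)$: a finite undirected graph with no self-loops and no isolated nodes, where each node $n_i\in\mathcal{V}$ carries a discrete feature $x^n_i$ and each edge $e_{i,j}\in\mathcal{E}$ (joining $n_i$ and $n_j$) carries a discrete feature $x^e_{i,j}=x^e_{j,i}$. Write $\mathcal{N}_{(i)}$ for the set of neighbours of $n_i$, and $\{\{\cdot\}\}$ for a multiset. Both algorithms below are run on the two graphs simultaneously with the same injective function $HASH$ (equal inputs give equal outputs and distinct inputs give distinct outputs, across both graphs). E-WL (Edged Weisfeiler–Lehman): $c^{(0)}_i=x^n_i$ and $c^{(l)}_i=HASH\big(c^{(l-1)}_i,\{\{(c^{(l-1)}_j,x^e_{i,j}) : n_j\in\mathcal{N}_{(i)}\}\}\big)$. E-WL-EA (Edged Weisfeiler–Lehman with edge aggregation): $c^{(0)}_i=x^n_i$, $d^{(0)}_{i,j}=x^e_{i,j}$, and for $l\ge1$: $c^{(l)}_i=HASH\big(c^{(l-1)}_i,\{\{(c^{(l-1)}_j,d^{(l-1)}_{i,j}) : n_j\in\mathcal{N}_{(i)}\}\}\big)$, then for every edge $d^{(l)}_{i,j}=HASH\big(d^{(l-1)}_{i,j},c^{(l)}_i,c^{(l)}_j\big)$.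 For either algorithm, iteration continues until the node colours stabilize; the output for a graph is the multiset of node colours $\{\{c^{(l)}_i : n_i\in\mathcal{V}\}\}$. The algorithm distinguishes two graphs (declares them non-isomorphic) if these multisets of node colours differ for the two graphs (at some iteration $l$). *)

From mathcomp Require Import all_boot.
Set Implicit Arguments. Unset Strict Implicit. Unset Printing Implicit Defensive.

(* An edge-featured graph whose node/edge features take values in the
   colour type C (discrete features; c^(0) = x^n, d^(0) = x^e). *)
Record efgraph (C : eqType) := EFGraph {
  vert : finType;
  adj : rel vert;
  nfeat : vert -> C;
  efeat : vert -> vert -> C;
  adj_sym : symmetric adj;
  adj_irrefl : irreflexive adj;
  adj_noniso : forall i : vert, exists j, adj i j;
  efeat_sym : forall i j : vert, efeat i j = efeat j i
}.

Section Defs.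
Variable C : eqType.

(* HASH on inputs (colour, multiset of pairs): multisets are represented by
   sequences up to permutation; injectivity means equal outputs iff equal
   inputs (first components equal and multisets equal). *)
Definition hash_inj (h : C -> seq (C * C) -> C) : Prop :=
  forall a b (s t : seq (C * C)), h a s = h b t <-> (a = b /\ perm_eq s t).

Definition hash3_inj (h : C -> C -> C -> C) : Prop :=
  forall a b c a' b' c', h a b c = h a' b' c' -> (a, b, c) = (a', b', c').

Definition nbr_ms (G : efgraph C) (c : vert G -> C) (w : vert G -> vert G -> C)
  (i : vert G) : seq (C * C) :=
  [seq (c j, w i j) | j <- enum (vert G) & adj i j].

Fixpoint ewl (h : C -> seq (C * C) -> C) (G : efgraph C) (l : nat)
  : vert G -> C :=
  match l with
  | 0 => @nfeat C G
  | l'.+1 => let c := @ewl h G l' in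
             fun i => h (c i) (nbr_ms c (@efeat C G) i)
  end.

Fixpoint ewlea (h : C -> seq (C * C) -> C) (h3 : C -> C -> C -> C)
  (G : efgraph C) (l : nat) : (vert G -> C) * (vert G -> vert G -> C) :=
  match l with
  | 0 => (@nfeat C G, @efeat C G)
  | l'.+1 =>
      let cd := @ewlea h h3 G l' in
      let c' := fun i => h (cd.1 i) (nbr_ms cd.1 cd.2 i) in
      (c', fun i j => h3 (cd.2 i j) (c' i) (c' j))
  end.

Arguments ewl h G l : clear implicits.
Arguments ewlea h h3 G l : clear implicits.

Definition node_ms (G : efgraph C) (c : vert G -> C) : seq C :=
  [seq c v | v <- enum (vert G)].

Definition ewl_distinguishes h (G1 G2 : efgraph C) : Prop :=
  exists l : nat, ~~ perm_eq (node_ms (ewl h G1 l)) (node_ms (ewl h G2 l)).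

Definition ewlea_distinguishes h h3 (G1 G2 : efgraph C) : Prop :=
  exists l : nat,
    ~~ perm_eq (node_ms (ewlea h h3 G1 l).1) (node_ms (ewlea h h3 G2 l).1).

End Defs.

From mathcomp Require Import all_boot.

Set Implicit Arguments.
Unset Strict Implicit.
Unset Printing Implicit Defensive.

(* By induction on l: for nodes u, v of the two graphs the E-WL-EA colours
   c^(l) agree iff the E-WL colours agree, and for pairs of edges whose
   endpoints have equal E-WL colours at round l, the edge colours d^(l) agree
   iff the edge features agree.  Indeed, by injectivity of HASH3, d^(l)
   records x^e together with the endpoint colours of rounds 1..l, and earlier
   E-WL colours are determined by later ones.  So both algorithms see the same
   neighbour multisets up to a renaming of colours, and their node-colour
   multisets coincide at exactly the same iterations. *)

Lemma perm_map_transfer (A B X Y : eqType) (s : seq A) (t : seq B)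
  (f : A -> X) (g : B -> X) (f' : A -> Y) (g' : B -> Y) :
  (forall x y, f x = g y -> f' x = g' y) ->
  perm_eq (map f s) (map g t) -> perm_eq (map f' s) (map g' t).
Proof.
move=> fg_f'g'; elim: s t => [|x s IHs] t /=.
  by move/perm_size; rewrite size_map; case: t.
move=> eq_fxs.
have /mapP[y yt fxy] : f x \in map g t by rewrite -(perm_mem eq_fxs) mem_head.
have t_rem := perm_to_rem yt.
have eq_fs : perm_eq (map f s) (map g (rem y t)).
  by rewrite -(perm_cons (f x)) (perm_trans eq_fxs) // fxy (perm_map g t_rem).
rewrite perm_sym (perm_trans (perm_map g' t_rem)) //= perm_sym.
by rewrite (fg_f'g' x y fxy) perm_cons IHs.
Qed.

Lemma perm_map_transferE (A B X Y : eqType) (s : seq A) (t : seq B)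
  (f : A -> X) (g : B -> X) (f' : A -> Y) (g' : B -> Y) :
  (forall x y, f x = g y <-> f' x = g' y) ->
  perm_eq (map f s) (map g t) = perm_eq (map f' s) (map g' t).
Proof. by move=> fg_f'g'; apply/idP/idP; apply: perm_map_transfer => x y /fg_f'g'. Qed.

Section EdgeAggregation.
Variables (C : eqType) (h : C -> seq (C * C) -> C) (h3 : C -> C -> C -> C).
Hypotheses (h_inj : hash_inj h) (h3_inj : hash3_inj h3).

Lemma perm_nbr_ms_transfer (G G' : efgraph C)
  (c : vert G -> C) (w : vert G -> vert G -> C)
  (c' : vert G' -> C) (w' : vert G' -> vert G' -> C)
  (d : vert G -> C) (z : vert G -> vert G -> C)
  (d' : vert G' -> C) (z' : vert G' -> vert G' -> C) u v :
  (forall x y, (c x, w u x) = (c' y, w' v y) <-> (d x, z u x) = (d' y, z' v y)) ->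
  perm_eq (nbr_ms c w u) (nbr_ms c' w' v) = perm_eq (nbr_ms d z u) (nbr_ms d' z' v).
Proof. exact: perm_map_transferE. Qed.

Lemma ewl_eq_of_succ (G G' : efgraph C) l (u : vert G) (v : vert G') :
  ewl h l.+1 u = ewl h l.+1 v -> ewl h l u = ewl h l v.
Proof. by case/h_inj. Qed.

Variables G G' : efgraph C.

Definition ewlea_node_agree l := forall (u : vert G) (v : vert G'),
  (ewlea h h3 G l).1 u = (ewlea h h3 G' l).1 v <-> ewl h l u = ewl h l v.

Definition ewlea_edge_agree l := forall (u u' : vert G) (v v' : vert G'),
  ewl h l u = ewl h l v -> ewl h l u' = ewl h l v' ->
  (ewlea h h3 G l).2 u u' = (ewlea h h3 G' l).2 v v' <-> efeat u u' = efeat v v'.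

Lemma ewlea_node_agreeS l :
  ewlea_node_agree l -> ewlea_edge_agree l -> ewlea_node_agree l.+1.
Proof.
move=> node_l edge_l u v /=.
have nbr_agree : ewl h l u = ewl h l v ->
    perm_eq (nbr_ms (ewlea h h3 G l).1 (ewlea h h3 G l).2 u)
            (nbr_ms (ewlea h h3 G' l).1 (ewlea h h3 G' l).2 v) =
    perm_eq (nbr_ms (@ewl C h G l) (@efeat C G) u)
            (nbr_ms (@ewl C h G' l) (@efeat C G') v).
  move=> ewl_uv; apply: perm_nbr_ms_transfer => x y; split.
    by case=> /node_l ewl_xy /(edge_l _ _ _ _ ewl_uv ewl_xy) ->; rewrite ewl_xy.
  by case=> ewl_xy /(edge_l _ _ _ _ ewl_uv ewl_xy) <-; rewrite (iffRL (node_l x y)).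
split=> /h_inj[eq_uv eq_nbr]; apply/h_inj.
  by have ewl_uv := iffLR (node_l u v) eq_uv; rewrite -nbr_agree.
by rewrite (iffRL (node_l u v) eq_uv) nbr_agree.
Qed.

Lemma ewlea_edge_agreeS l :
  ewlea_node_agree l.+1 -> ewlea_edge_agree l -> ewlea_edge_agree l.+1.
Proof.
move=> node_Sl edge_l u u' v v' ewl_uv ewl_u'v' /=.
have edge_uv := edge_l _ _ _ _ (ewl_eq_of_succ ewl_uv) (ewl_eq_of_succ ewl_u'v').
move: (iffRL (node_Sl u v) ewl_uv) (iffRL (node_Sl u' v') ewl_u'v') => /= -> ->.
by split=> [/h3_inj[/edge_uv] | /edge_uv ->].
Qed.

Lemma ewlea_agree l : ewlea_node_agree l /\ ewlea_edge_agree l.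
Proof.
elim: l => [|l [node_l edge_l]]; first by [].
have node_Sl := ewlea_node_agreeS node_l edge_l.
by split; last exact: ewlea_edge_agreeS.
Qed.

End EdgeAggregation.

Lemma perm_node_ms_ewlea (C : eqType) (h : C -> seq (C * C) -> C)
  (h3 : C -> C -> C -> C) (h_inj : hash_inj h) (h3_inj : hash3_inj h3)
  (G1 G2 : efgraph C) l :
  perm_eq (node_ms (ewlea h h3 G1 l).1) (node_ms (ewlea h h3 G2 l).1) =
  perm_eq (node_ms (@ewl C h G1 l)) (node_ms (@ewl C h G2 l)).
Proof. exact: perm_map_transferE (ewlea_agree h_inj h3_inj G1 G2 l).1. Qed.

Theorem theorem2 (C : eqType) (h : C -> seq (C * C) -> C)
  (h3 : C -> C -> C -> C) (Hh : hash_inj h) (Hh3 : hash3_inj h3)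
  (G1 G2 : efgraph C) :
  ewlea_distinguishes h h3 G1 G2 <-> ewl_distinguishes h G1 G2.
Proof.
by split=> -[l dist]; exists l; move: dist; rewrite perm_node_ms_ewlea.
Qed.
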